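(* Let $V\in\mathcal C(S^1)$ be odd and let $A=I_1\cup\dots\cup I_n\subset S^1$ be a disjoint union of closed intervals $I_j=[\alpha_j,\beta_j]$. Assume that for every continuous $h:S^1\to\mathbb R_{\ge0}$ with $h|_A=0$ one has $(V*h)(\alpha_j)>0$ and $(V*h)(\beta_j)<0$ for all $1\le j\le n$. Let $f:[0,\infty)\times S^1\to\mathbb R_{\ge0}$ be a solution of (TP) with $D=0$ such that $f(0,\cdot)|_A=0$. Then $f(t,\cdot)|_A=0$ for all $t\ge0$; equivalently, $\operatorname{supp}f(0,\cdot)\subset\overline{S^1\setminus A}$ implies $\operatorname{supp}f(t,\cdot)\subset\overline{S^1\setminus A}$ for all $t\ge0$.
   Context: $S^1=\mathbb R/\mathbb Z$; a closed interval $[\alpha,\beta]$ in $S^1$ is a closed connected proper subset with lower end $\alpha$ and upper end $\beta$ (image of $[a,b]\subset\mathbb R$, $b-a<1$). $(V*f)(\theta)=\int_{S^1}V(\theta-\psi)f(\psi)d\psi$. Equation (TP) with $D=0$: $\partial_tf=\partial_\theta((V*f)f)$. *)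

From Stdlib Require Import Reals Lra ZArith ClassicalEpsilon.
Open Scope R_scope.

(* Functions on S^1 = R/Z are represented as 1-periodic functions R -> R. *)
Definition periodic1 (g : R -> R) : Prop := forall x, g (x + 1) = g x.

Definition odd_fun (g : R -> R) : Prop := forall x, g (- x) = - g x.

(* The integral over S^1 of a 1-periodic function is the integral over [0,1].
   (V*g)(theta) = int_0^1 V(theta - psi) g(psi) dpsi; chosen by epsilon,
   so it equals the Riemann integral whenever the integrand is integrable
   (always the case for continuous V, g). *)
Definition conv (V g : R -> R) (theta : R) : R :=
  epsilon (inhabits 0)
    (fun c => exists pr : Riemann_integrable (fun psi => V (theta - psi) * g psi) 0 1,
               RiemannInt pr = c).

(* Closed interval [a,b] of S^1 (image of [a,b] subset R, with b - a < 1):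
   theta (mod 1) lies in it. *)
Definition in_arc (a b theta : R) : Prop :=
  exists k : Z, a <= theta + IZR k <= b.

Definition inA (n : nat) (alpha beta : nat -> R) (theta : R) : Prop :=
  exists j, (j < n)%nat /\ in_arc (alpha j) (beta j) theta.

Definition valid_intervals (n : nat) (alpha beta : nat -> R) : Prop :=
  (forall j, (j < n)%nat -> alpha j <= beta j /\ beta j - alpha j < 1) /\
  (forall i j, (i < n)%nat -> (j < n)%nat -> i <> j ->
     forall theta, ~ (in_arc (alpha i) (beta i) theta /\ in_arc (alpha j) (beta j) theta)).

Definition cont2_on (P : R -> R -> Prop) (F : R -> R -> R) : Prop :=
  forall t theta, P t theta ->
  forall eps, 0 < eps -> exists del, 0 < del /\
    forall s phi, P s phi -> Rabs (s - t) < del -> Rabs (phi - theta) < del ->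
      Rabs (F s phi - F t theta) < eps.

(* Classical solution f(t,theta) of (TP) with D = 0 on [0,oo) x S^1:
   d_t f = d_theta ((V*f) f).  f is continuous on [0,oo) x S^1, C^1 on
   (0,oo) x S^1, 1-periodic in theta and the equation holds pointwise for t > 0. *)
Definition TP0_solution (V : R -> R) (f : R -> R -> R) : Prop :=
  (forall t, 0 <= t -> periodic1 (f t)) /\
  exists ft fth : R -> R -> R,
    cont2_on (fun t _ => 0 <= t) f /\
    cont2_on (fun t _ => 0 < t) ft /\
    cont2_on (fun t _ => 0 < t) fth /\
    (forall t theta, 0 < t -> derivable_pt_lim (fun s => f s theta) t (ft t theta)) /\
    (forall t theta, 0 < t -> derivable_pt_lim (fun phi => f t phi) theta (fth t theta)) /\
    (forall t theta, 0 < t ->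
       derivable_pt_lim (fun phi => conv V (f t) phi * f t phi) theta (ft t theta)).

From Stdlib Require Import Reals ZArith Lra Lia ClassicalEpsilon Classical.
From Coquelicot Require Import Coquelicot.
Open Scope R_scope.

(* Let E(t) = sum_j int_{alpha_j}^{beta_j} f(t,theta) dtheta be the mass of
   f(t,.) on A.  Integrating the equation over each arc,
     E'(t) = sum_j [ (V*f)(beta_j) f(beta_j) - (V*f)(alpha_j) f(alpha_j) ].
   Key estimate: for every continuous periodic g >= 0 with M = sup |V|,
     (V*g)(alpha_j) >= - M E_g   and   (V*g)(beta_j) <= M E_g,
   where E_g is the mass of g on A.  Indeed g * phi_e, with phi_e a
   continuous cutoff vanishing on A and equal to 1 outside the
   e-neighbourhood of A, satisfies the hypothesis of the theorem (or is 0),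
   so its convolution has the right sign at the endpoints, while the
   remainder g * (1 - phi_e) has mass at most E_g + O(e).  Hence
   E' <= K(t) E with K continuous, E >= 0 and E(0) = 0, and Gronwall's
   lemma gives E = 0.  Since f(t,.) is continuous and nonnegative and the
   arcs are nondegenerate (another consequence of the hypothesis), f(t,.)
   vanishes on A. *)

Ltac rabs := unfold Rabs in *; repeat match goal with
  | H : context [Rcase_abs ?x] |- _ => destruct (Rcase_abs x)
  | |- context [Rcase_abs ?x] => destruct (Rcase_abs x)
  end.

(* Integrals produce equations over Coquelicot's module types; state them
   over R so that ring can be used. *)
Ltac req := match goal with |- @eq _ ?a ?b => change (@eq R a b) end.

Lemma continuity_pt_intro (g : R -> R) x0 :
  (forall eps, 0 < eps -> exists del, 0 < del /\
     forall x, Rabs (x - x0) < del -> Rabs (g x - g x0) < eps) ->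
  continuity_pt g x0.
Proof.
  intros H eps Heps. destruct (H eps Heps) as [d [Hd Hd']].
  exists d. split; auto. intros x [_ Hx]. apply Hd'; auto.
Qed.

Lemma continuity_pt_elim (g : R -> R) x0 : continuity_pt g x0 ->
  forall eps, 0 < eps -> exists del, 0 < del /\
    forall x, Rabs (x - x0) < del -> Rabs (g x - g x0) < eps.
Proof.
  intros H eps Heps. destruct (H eps Heps) as [d [Hd Hd']]. simpl in Hd'.
  exists d. split; auto. intros x Hx.
  destruct (Req_dec x x0) as [->|Hne].
  - rewrite Rminus_diag, Rabs_R0. auto.
  - apply Hd'. repeat split; auto.
Qed.

Lemma lipschitz1_continuity (g : R -> R) :
  (forall a b, Rabs (g a - g b) <= Rabs (a - b)) -> continuity g.
Proof.
  intros H x. apply continuity_pt_intro. intros eps Heps. exists eps.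
  split; auto. intros y Hy. eapply Rle_lt_trans; [apply H | exact Hy].
Qed.

Lemma Rmax0_lipschitz a b : Rabs (Rmax 0 a - Rmax 0 b) <= Rabs (a - b).
Proof. unfold Rmax. repeat destruct Rle_dec; rabs; lra. Qed.

Lemma continuity_translate_rev (V : R -> R) th :
  continuity V -> continuity (fun psi => V (th - psi)).
Proof.
  intros HV x. apply continuity_pt_comp with (f1 := fun psi => th - psi); [|apply HV].
  apply continuity_pt_minus; [apply continuity_pt_const; intros ? ?; auto | apply continuity_pt_id].
Qed.

(** * The distance to the integers and closed arcs of S^1 *)

Lemma IZR_close_eq (a b : Z) : Rabs (IZR a - IZR b) < 1 -> a = b.
Proof.
  intros H. rewrite <- minus_IZR in H.
  assert (H1 : IZR (-1) < IZR (a - b)) by (rabs; lra).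
  assert (H2 : IZR (a - b) < IZR 1) by (rabs; lra).
  apply lt_IZR in H1. apply lt_IZR in H2. lia.
Qed.

Definition nearest_int (y : R) : Z := (up (y + /2) - 1)%Z.

Definition distZ (y : R) : R := Rabs (y - IZR (nearest_int y)).

Lemma nearest_int_spec y : Rabs (y - IZR (nearest_int y)) <= /2.
Proof.
  unfold nearest_int. rewrite minus_IZR. destruct (archimed (y + /2)) as [H1 H2].
  apply Rabs_le. lra.
Qed.

Lemma distZ_le y k : distZ y <= Rabs (y - IZR k).
Proof.
  destruct (Rle_or_lt (distZ y) (Rabs (y - IZR k))) as [H|H]; auto.
  exfalso. pose proof (nearest_int_spec y) as Hb. unfold distZ in H.
  assert (H0 : Rabs (IZR k - IZR (nearest_int y)) < 1) by (rabs; lra).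
  apply IZR_close_eq in H0. subst. lra.
Qed.

Lemma distZ_abs y : distZ y <= Rabs y.
Proof. pose proof (distZ_le y 0) as H. rewrite Rminus_0_r in H. exact H. Qed.

Lemma distZ_lipschitz x y : Rabs (distZ x - distZ y) <= Rabs (x - y).
Proof.
  pose proof (distZ_le x (nearest_int y)). pose proof (distZ_le y (nearest_int x)).
  unfold distZ in *. rabs; lra.
Qed.

Lemma distZ_continuity : continuity distZ.
Proof. apply lipschitz1_continuity, distZ_lipschitz. Qed.

Lemma distZ_periodic y k : distZ (y + IZR k) = distZ y.
Proof.
  apply Rle_antisym.
  - pose proof (distZ_le (y + IZR k) (nearest_int y + k)) as H. rewrite plus_IZR in H.
    unfold distZ at 2. replace (y + IZR k - (IZR (nearest_int y) + IZR k))
      with (y - IZR (nearest_int y)) in H by ring. exact H.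
  - pose proof (distZ_le y (nearest_int (y + IZR k) - k)) as H. rewrite minus_IZR in H.
    unfold distZ at 2. replace (y - (IZR (nearest_int (y + IZR k)) - IZR k))
      with (y + IZR k - IZR (nearest_int (y + IZR k))) in H by ring. exact H.
Qed.

Lemma distZ_small y : 0 <= y <= /2 -> distZ y = y.
Proof.
  intros Hy. apply Rle_antisym.
  - pose proof (distZ_abs y). rewrite Rabs_pos_eq in H; lra.
  - unfold distZ. destruct (Z_lt_le_dec 0 (nearest_int y)) as [H|H].
    + assert (IZR 1 <= IZR (nearest_int y)) by (apply IZR_le; lia). rabs; lra.
    + apply IZR_le in H. rabs; lra.
Qed.

Lemma distZ_far y e : 0 <= e -> e <= y <= 1 - e -> e <= distZ y.
Proof.
  intros He Hy. unfold distZ. destruct (Z_lt_le_dec 0 (nearest_int y)) as [H|H].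
  - assert (IZR 1 <= IZR (nearest_int y)) by (apply IZR_le; lia). rabs; lra.
  - apply IZR_le in H. rabs; lra.
Qed.

Definition arc_mid (a b : R) := (a + b) / 2.
Definition arc_radius (a b : R) := (b - a) / 2.

Lemma in_arc_distZ a b x : in_arc a b x <-> distZ (x - arc_mid a b) <= arc_radius a b.
Proof.
  unfold arc_mid, arc_radius. split.
  - intros [k Hk]. rewrite <- (distZ_periodic _ k). eapply Rle_trans; [apply distZ_abs|].
    apply Rabs_le. lra.
  - intros H. unfold distZ in H. exists (- nearest_int (x - (a + b) / 2))%Z.
    rewrite opp_IZR. rabs; lra.
Qed.

Lemma periodic_nat g : periodic1 g -> forall m x, g (x + INR m) = g x.
Proof.
  intros Hg m. induction m; intros x.
  - simpl. f_equal. ring.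
  - rewrite S_INR. replace (x + (INR m + 1)) with ((x + INR m) + 1) by ring.
    rewrite Hg. apply IHm.
Qed.

Lemma periodic_int g : periodic1 g -> forall k x, g (x + IZR k) = g x.
Proof.
  intros Hg k x. destruct (Z_le_gt_dec 0 k) as [H|H].
  - rewrite <- (Z2Nat.id k) by lia. rewrite <- INR_IZR_INZ. apply periodic_nat; auto.
  - replace k with (- Z.of_nat (Z.to_nat (- k)))%Z by lia.
    rewrite opp_IZR, <- INR_IZR_INZ.
    rewrite <- (periodic_nat g Hg (Z.to_nat (-k)) (x + - _)). f_equal. ring.
Qed.

Lemma reduce_mod1 x : exists k : Z, 0 <= x + IZR k <= 1.
Proof. exists (1 - up x)%Z. rewrite minus_IZR. destruct (archimed x). lra. Qed.

Lemma periodic_bounded g : continuity g -> periodic1 g ->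
  exists B, 0 <= B /\ forall x, Rabs (g x) <= B.
Proof.
  intros Hc Hp.
  destruct (continuity_ab_maj (fun x => Rabs (g x)) 0 1) as [Mx [HM _]]; [lra| |].
  { intros c _. apply continuity_pt_comp with (f2 := Rabs); [apply Hc | apply Rcontinuity_abs]. }
  exists (Rabs (g Mx)). split; [apply Rabs_pos|].
  intros x. destruct (reduce_mod1 x) as [k Hk].
  rewrite <- (periodic_int g Hp k x). apply HM. exact Hk.
Qed.

Fixpoint sumR (F : nat -> R) (n : nat) : R :=
  match n with O => 0 | S k => sumR F k + F k end.

Lemma sumR_ext F G n : (forall i, (i < n)%nat -> F i = G i) -> sumR F n = sumR G n.
Proof.
  induction n; simpl; intros H; auto.
  rewrite IHn by (intros; apply H; lia). rewrite H by lia. auto.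
Qed.

Lemma sumR_le F G n : (forall i, (i < n)%nat -> F i <= G i) -> sumR F n <= sumR G n.
Proof.
  induction n; simpl; intros H; [lra|].
  assert (F n <= G n) by (apply H; lia).
  assert (sumR F n <= sumR G n) by (apply IHn; intros; apply H; lia). lra.
Qed.

Lemma sumR_const c n : sumR (fun _ => c) n = INR n * c.
Proof. induction n; simpl sumR; [simpl; ring|]. rewrite IHn, S_INR. ring. Qed.

Lemma sumR_ge0 F n : (forall i, (i < n)%nat -> 0 <= F i) -> 0 <= sumR F n.
Proof.
  intros H. rewrite <- (Rmult_0_r (INR n)), <- sumR_const. apply sumR_le. exact H.
Qed.

Lemma sumR_ge_term F n i : (forall i, (i < n)%nat -> 0 <= F i) -> (i < n)%nat -> F i <= sumR F n.
Proof.
  induction n; simpl; intros H Hi; [lia|].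
  assert (0 <= F n) by (apply H; lia).
  destruct (Nat.eq_dec i n) as [->|Hne].
  - assert (0 <= sumR F n) by (apply sumR_ge0; intros; apply H; lia). lra.
  - assert (F i <= sumR F n) by (apply IHn; [intros; apply H | ]; lia). lra.
Qed.

Lemma sumR_continuity (F : nat -> R -> R) n : (forall i, (i < n)%nat -> continuity (F i)) ->
  continuity (fun x => sumR (fun i => F i x) n).
Proof.
  induction n; simpl; intros H.
  - apply continuity_const. intros ? ?; auto.
  - apply continuity_plus; [apply IHn; intros; apply H | apply H]; lia.
Qed.

Lemma sumR_mult_l c F n : c * sumR F n = sumR (fun i => c * F i) n.
Proof. induction n; simpl; [ring|]. rewrite <- IHn. ring. Qed.

Lemma sumR_add_const F c n : sumR (fun i => F i + c) n = sumR F n + INR n * c.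
Proof. induction n; simpl sumR; [simpl; ring|]. rewrite IHn, S_INR. ring. Qed.

Lemma is_derive_sumR (G : nat -> R -> R) (dG : nat -> R) n t :
  (forall j, (j < n)%nat -> is_derive (G j) t (dG j)) ->
  is_derive (fun s => sumR (fun j => G j s) n) t (sumR dG n).
Proof.
  induction n; intros H; simpl.
  - apply (is_derive_const (K := R_AbsRing) (V := R_NormedModule) 0 t).
  - apply (is_derive_plus (fun s => sumR (fun j => G j s) n) (G n));
      [apply IHn; intros; apply H | apply H]; lia.
Qed.

Lemma continuous_of_continuity (g : R -> R) x : continuity g -> continuous g x.
Proof. intros H. apply continuity_pt_filterlim, H. Qed.

Lemma ex_RInt_continuity (g : R -> R) a b : continuity g -> ex_RInt g a b.
Proof.
  intros H. apply (ex_RInt_continuous (V := R_CompleteNormedModule)).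
  intros. apply continuous_of_continuity, H.
Qed.

Lemma RInt_chasles (g : R -> R) a b c : continuity g -> RInt g a b + RInt g b c = RInt g a c.
Proof. intros H. apply (RInt_Chasles g a b c); apply ex_RInt_continuity; auto. Qed.

Lemma RInt_zero a b : RInt (fun _ => 0) a b = 0.
Proof. rewrite RInt_const. apply (Rmult_0_r (b - a)). Qed.

Lemma RInt_lin (g h : R -> R) a b k : continuity g -> continuity h ->
  RInt (fun x => g x + k * h x) a b = RInt g a b + k * RInt h a b.
Proof.
  intros Hg Hh.
  assert (E1 : ex_RInt g a b) by (apply ex_RInt_continuity; auto).
  assert (E2 : ex_RInt h a b) by (apply ex_RInt_continuity; auto).
  pose proof (RInt_plus g (fun x => scal k (h x)) a b E1 (ex_RInt_scal h a b k E2)) as H.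
  pose proof (RInt_scal h a b k E2) as H2. simpl in H, H2.
  change (RInt (fun x => g x + k * h x) a b = RInt g a b + RInt (fun x => k * h x) a b) in H.
  change (RInt (fun x => k * h x) a b = k * RInt h a b) in H2.
  rewrite H, H2. reflexivity.
Qed.

Lemma RInt_scal_l (h : R -> R) a b k : continuity h -> RInt (fun x => k * h x) a b = k * RInt h a b.
Proof.
  intros Hh. rewrite <- (Rplus_0_l (k * RInt h a b)), <- (RInt_zero a b), <- RInt_lin; auto.
  - apply RInt_ext. intros. req. ring.
  - apply continuity_const. intros ? ?; auto.
Qed.

Lemma RInt_sumR (F : nat -> R -> R) n a b : (forall i, (i < n)%nat -> continuity (F i)) ->
  RInt (fun x => sumR (fun i => F i x) n) a b = sumR (fun i => RInt (F i) a b) n.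
Proof.
  induction n; intros H; simpl; [apply RInt_zero|].
  assert (C1 : continuity (fun x => sumR (fun i => F i x) n))
    by (apply (sumR_continuity F n); intros; apply H; lia).
  assert (C2 : continuity (F n)) by (apply H; lia).
  rewrite <- IHn by (intros; apply H; lia).
  rewrite <- (Rmult_1_l (RInt (F n) a b)), <- RInt_lin by auto.
  apply RInt_ext. intros. rewrite Rmult_1_l. reflexivity.
Qed.

Lemma RInt_mono (g h : R -> R) a b : a <= b -> continuity g -> continuity h ->
  (forall x, a < x < b -> g x <= h x) -> RInt g a b <= RInt h a b.
Proof. intros. apply RInt_le; auto; apply ex_RInt_continuity; auto. Qed.

Lemma RInt_upper (g : R -> R) a b B : a <= b -> continuity g ->
  (forall x, a < x < b -> g x <= B) -> RInt g a b <= B * (b - a).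
Proof.
  intros Hab Hg H. replace (B * (b - a)) with (RInt (fun _ => B) a b).
  - apply RInt_mono; auto. apply continuity_const. intros ? ?; auto.
  - rewrite RInt_const. change (scal (b - a) B) with ((b - a) * B). req. ring.
Qed.

Lemma RInt_nonneg (g : R -> R) a b : a <= b -> continuity g ->
  (forall x, a < x < b -> 0 <= g x) -> 0 <= RInt g a b.
Proof.
  intros Hab Hg H. rewrite <- (RInt_zero a b). apply RInt_mono; auto.
  apply continuity_const. intros ? ?; auto.
Qed.

Lemma RInt_zero_nonneg (g : R -> R) a b : continuity g -> a < b -> (forall x, 0 <= g x) ->
  RInt g a b = 0 -> forall x, a <= x <= b -> g x = 0.
Proof.
  intros Hc Hab Hg HI x Hx. destruct (Hg x) as [Hp|Hz]; [exfalso|auto].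
  destruct (continuity_pt_elim g x (Hc x) (g x / 2)) as [d [Hd Hd']]; [lra|].
  set (c := Rmax a (x - d / 2)). set (e := Rmin b (x + d / 2)).
  assert (Hac : a <= c) by apply Rmax_l. assert (Heb : e <= b) by apply Rmin_l.
  assert (Hce : c < e) by (unfold c, e, Rmax, Rmin; repeat destruct Rle_dec; lra).
  assert (Hin : forall y, c < y < e -> 0 < g y).
  { intros y Hy. assert (Rabs (y - x) < d)
      by (unfold c, e, Rmax, Rmin in Hy; repeat destruct Rle_dec; rabs; lra).
    pose proof (Hd' y H). rabs; lra. }
  assert (0 < RInt g c e)
    by (apply RInt_gt_0; auto; intros; apply continuous_of_continuity; auto).
  rewrite <- (RInt_chasles g a c b Hc), <- (RInt_chasles g c e b Hc) in HI.
  assert (0 <= RInt g a c) by (apply RInt_nonneg; auto).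
  assert (0 <= RInt g e b) by (apply RInt_nonneg; auto).
  lra.
Qed.

(* The integral of a continuous periodic function over any period is its
   integral over [0, 1]: c |-> int_c^{c+1} p has zero derivative. *)
Lemma RInt_period_shift (p : R -> R) : continuity p -> periodic1 p ->
  forall c, RInt p c (c + 1) = RInt p 0 1.
Proof.
  intros Hc Hp.
  set (I := fun b => RInt p 0 b).
  assert (HI : forall b, is_derive I b (p b)).
  { intros b. apply (is_derive_RInt (V := R_NormedModule) p I 0 b).
    - apply filter_forall. intros x. apply (RInt_correct (V := R_CompleteNormedModule)).
      apply ex_RInt_continuity; auto.
    - apply continuous_of_continuity; auto. }
  set (F := fun c => I (c + 1) - I c).
  assert (HF : forall c, RInt p c (c + 1) = F c).
  { intros c. pose proof (RInt_chasles p 0 c (c + 1) Hc). unfold F, I. lra. }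
  assert (HD : forall c, is_derive F c 0).
  { intros c. unfold F. replace 0 with (1 * p (c + 1) - p c) by (rewrite Hp; ring).
    apply (is_derive_minus (fun c => I (c + 1)) I); [|apply HI].
    apply (is_derive_comp I (fun c => c + 1)); [apply HI|].
    auto_derive; auto. }
  assert (HI0 : I 0 = 0) by (unfold I; apply (RInt_point (V := R_CompleteNormedModule))).
  intros c. rewrite HF.
  destruct (MVT_gen F 0 c (fun _ => 0)) as [d [_ Hd]].
  - intros. apply HD.
  - intros x _. apply continuity_pt_filterlim.
    apply (ex_derive_continuous (K := R_AbsRing) (V := R_NormedModule) F x).
    exists 0. apply HD.
  - unfold F in *. rewrite Rplus_0_l in Hd. lra.
Qed.

Lemma conv_RInt V g th : continuity V -> continuity g ->
  conv V g th = RInt (fun psi => V (th - psi) * g psi) 0 1.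
Proof.
  intros HV Hg. unfold conv.
  assert (pr : Riemann_integrable (fun psi => V (th - psi) * g psi) 0 1).
  { apply continuity_implies_RiemannInt; [lra|]. intros x _.
    apply continuity_pt_mult; [apply continuity_translate_rev, HV | apply Hg]. }
  destruct (epsilon_spec (inhabits 0) (fun c => exists pr : Riemann_integrable
      (fun psi => V (th - psi) * g psi) 0 1, RiemannInt pr = c)) as [pr' Hpr'].
  - exists (RiemannInt pr). exists pr. auto.
  - rewrite <- Hpr'. symmetry. apply RInt_Reals.
Qed.

Lemma conv_sub V g h th : continuity V -> continuity g -> continuity h ->
  conv V g th - conv V h th = conv V (fun x => g x - h x) th.
Proof.
  intros HV Hg Hh.
  assert (Hgh : continuity (fun x => g x - h x)) by (apply continuity_minus; auto).
  rewrite !conv_RInt by auto.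
  pose proof (continuity_translate_rev V th HV) as HV'.
  transitivity (RInt (fun psi => V (th - psi) * g psi + -1 * (V (th - psi) * h psi)) 0 1).
  - rewrite RInt_lin by (apply continuity_mult; auto). ring.
  - apply RInt_ext. intros. req. ring.
Qed.

Lemma conv_abs_le V w u M th : continuity V -> (forall x, Rabs (V x) <= M) ->
  continuity w -> continuity u -> (forall x, Rabs (w x) <= u x) ->
  Rabs (conv V w th) <= M * RInt u 0 1.
Proof.
  intros HV HM Hw Hu Hwu. rewrite conv_RInt by auto.
  pose proof (continuity_translate_rev V th HV) as HV'.
  eapply Rle_trans.
  { apply abs_RInt_le; [lra|]. apply ex_RInt_continuity, continuity_mult; auto. }
  rewrite <- RInt_scal_l by auto. apply RInt_mono; [lra| | |].
  - intros x. apply continuity_pt_comp with (f2 := Rabs);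
      [apply continuity_mult; auto | apply Rcontinuity_abs].
  - apply continuity_mult; auto. apply continuity_const. intros ? ?; auto.
  - intros x _. change (Rabs (V (th - x) * w x) <= M * u x). rewrite Rabs_mult.
    apply Rmult_le_compat; auto using Rabs_pos.
Qed.

(** * A continuous cutoff vanishing on A *)

Definition clamp01 z := Rmax 0 (Rmin 1 z).

Lemma clamp01_lipschitz a b : Rabs (clamp01 a - clamp01 b) <= Rabs (a - b).
Proof. unfold clamp01, Rmax, Rmin. repeat destruct Rle_dec; rabs; lra. Qed.

Lemma clamp01_bounds z : 0 <= clamp01 z <= 1.
Proof. unfold clamp01, Rmax, Rmin. repeat destruct Rle_dec; lra. Qed.

Definition plateau a b e x :=
  clamp01 ((arc_radius a b + e - distZ (x - arc_mid a b)) / e).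

Lemma plateau_continuity a b e : continuity (plateau a b e).
Proof.
  intros x. unfold plateau.
  apply continuity_pt_comp with (f2 := clamp01); [|apply lipschitz1_continuity, clamp01_lipschitz].
  unfold Rdiv. apply continuity_pt_mult; [|apply continuity_pt_const; intros ? ?; auto].
  apply continuity_pt_minus; [apply continuity_pt_const; intros ? ?; auto|].
  apply continuity_pt_comp with (f1 := fun x => x - arc_mid a b); [|apply distZ_continuity].
  apply continuity_pt_minus; [apply continuity_pt_id | apply continuity_pt_const; intros ? ?; auto].
Qed.

Lemma plateau_bounds a b e x : 0 <= plateau a b e x <= 1.
Proof. apply clamp01_bounds. Qed.

Lemma plateau_periodic a b e : periodic1 (plateau a b e).
Proof.
  intros x. unfold plateau.
  replace (x + 1 - arc_mid a b) with ((x - arc_mid a b) + IZR 1) by (simpl; ring).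
  rewrite distZ_periodic. reflexivity.
Qed.

Lemma plateau_on_arc a b e x : 0 < e -> in_arc a b x -> plateau a b e x = 1.
Proof.
  intros He Hx. apply in_arc_distZ in Hx. unfold plateau, clamp01.
  assert (1 <= (arc_radius a b + e - distZ (x - arc_mid a b)) / e).
  { apply Rmult_le_reg_r with e; auto. unfold Rdiv. rewrite Rmult_assoc, Rinv_l; lra. }
  unfold Rmax, Rmin. repeat destruct Rle_dec; lra.
Qed.

Lemma plateau_far a b e x : 0 < e ->
  arc_radius a b + e <= distZ (x - arc_mid a b) -> plateau a b e x = 0.
Proof.
  intros He H. unfold plateau, clamp01.
  assert ((arc_radius a b + e - distZ (x - arc_mid a b)) / e <= 0).
  { unfold Rdiv. apply Rmult_le_0_r; [lra | left; apply Rinv_0_lt_compat; lra]. }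
  unfold Rmax, Rmin. repeat destruct Rle_dec; lra.
Qed.

Definition plateau_sum n (al be : nat -> R) e x := sumR (fun i => plateau (al i) (be i) e x) n.

Definition cutoff n al be e x := Rmax 0 (1 - plateau_sum n al be e x).

Lemma plateau_sum_continuity n al be e : continuity (plateau_sum n al be e).
Proof.
  apply (sumR_continuity (fun i => plateau (al i) (be i) e)). intros. apply plateau_continuity.
Qed.

Lemma plateau_sum_ge0 n al be e x : 0 <= plateau_sum n al be e x.
Proof. apply sumR_ge0. intros. apply plateau_bounds. Qed.

Lemma cutoff_continuity n al be e : continuity (cutoff n al be e).
Proof.
  intros x. unfold cutoff.
  apply continuity_pt_comp with (f2 := Rmax 0); [|apply lipschitz1_continuity, Rmax0_lipschitz].
  apply continuity_pt_minus; [apply continuity_pt_const; intros ? ?; auto|].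
  apply plateau_sum_continuity.
Qed.

Lemma cutoff_periodic n al be e : periodic1 (cutoff n al be e).
Proof.
  intros x. unfold cutoff, plateau_sum. do 2 f_equal.
  apply sumR_ext. intros. apply plateau_periodic.
Qed.

Lemma cutoff_bounds n al be e x : 0 <= cutoff n al be e x <= 1.
Proof.
  pose proof (plateau_sum_ge0 n al be e x). unfold cutoff, Rmax. destruct Rle_dec; lra.
Qed.

Lemma cutoff_complement n al be e x : 1 - cutoff n al be e x <= plateau_sum n al be e x.
Proof.
  pose proof (plateau_sum_ge0 n al be e x). unfold cutoff, Rmax. destruct Rle_dec; lra.
Qed.

Lemma cutoff_on_A n al be e x : 0 < e -> inA n al be x -> cutoff n al be e x = 0.
Proof.
  intros He [j [Hj Ha]].
  assert (plateau (al j) (be j) e x <= plateau_sum n al be e x).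
  { apply (sumR_ge_term (fun i => plateau (al i) (be i) e x)); auto.
    intros; apply plateau_bounds. }
  rewrite plateau_on_arc in H by auto. unfold cutoff, Rmax. destruct Rle_dec; lra.
Qed.

Lemma cutoff_away n al be e x : 0 < e ->
  (forall i, (i < n)%nat -> arc_radius (al i) (be i) + e <= distZ (x - arc_mid (al i) (be i))) ->
  cutoff n al be e x = 1.
Proof.
  intros He Hfar. unfold cutoff, plateau_sum.
  rewrite (sumR_ext _ (fun _ => 0)) by (intros; apply plateau_far; auto).
  rewrite sumR_const, Rmult_0_r. unfold Rmax. destruct Rle_dec; lra.
Qed.

(** * Mass of a function on the arcs *)

Definition arc_mass n (al be : nat -> R) (g : R -> R) := sumR (fun i => RInt g (al i) (be i)) n.

Lemma arc_mass_vanishing n al be (g : R -> R) : (forall i, (i < n)%nat -> al i <= be i) ->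
  (forall x, inA n al be x -> g x = 0) -> arc_mass n al be g = 0.
Proof.
  intros Hab Hg. unfold arc_mass.
  rewrite (sumR_ext _ (fun _ => 0)), sumR_const; [ring|].
  intros i Hi. transitivity (RInt (fun _ => 0) (al i) (be i)); [|apply RInt_zero].
  apply RInt_ext. intros x Hx. apply Hg. exists i. split; auto. exists 0%Z.
  rewrite Rmin_left, Rmax_right in Hx by auto. rewrite Rplus_0_r. lra.
Qed.

Lemma vanishing_of_arc_mass n al be (g : R -> R) : (forall i, (i < n)%nat -> al i < be i) ->
  continuity g -> periodic1 g -> (forall x, 0 <= g x) ->
  arc_mass n al be g = 0 -> forall x, inA n al be x -> g x = 0.
Proof.
  intros Hab Hg Hgp Hg0 Hm x [j [Hj [k Hk]]].
  rewrite <- (periodic_int g Hgp k x).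
  apply (RInt_zero_nonneg g (al j) (be j)); auto.
  apply (sumR_ge_term (fun i => RInt g (al i) (be i)) n j) in Hj as Hle;
    [| intros i Hi; apply RInt_nonneg; auto; left; auto].
  pose proof (RInt_nonneg g (al j) (be j) (Rlt_le _ _ (Hab j Hj)) Hg (fun x _ => Hg0 x)).
  unfold arc_mass in Hm. lra.
Qed.

Lemma plateau_weighted_mass (g : R -> R) a b e : continuity g -> periodic1 g ->
  (forall x, 0 <= g x) -> 0 < e -> a <= b ->
  RInt (fun x => g x * plateau a b e x) 0 1 <= RInt g (a - e) (b + e).
Proof.
  intros Hc Hp Hg He Hab.
  set (p := fun x => g x * plateau a b e x).
  assert (Pc : continuity p) by (apply continuity_mult; auto; apply plateau_continuity).
  assert (Pp : periodic1 p) by (intros x; unfold p; rewrite Hp, plateau_periodic; auto).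
  assert (Ple : forall x, p x <= g x).
  { intros x. unfold p. pose proof (plateau_bounds a b e x). pose proof (Hg x). nra. }
  rewrite <- (RInt_period_shift p Pc Pp (a - e)).
  destruct (Rle_or_lt (b + e) (a - e + 1)) as [H|H].
  - rewrite <- (RInt_chasles p (a - e) (b + e) (a - e + 1) Pc).
    assert (RInt p (a - e) (b + e) <= RInt g (a - e) (b + e))
      by (apply RInt_mono; auto; lra).
    assert (RInt p (b + e) (a - e + 1) <= 0 * (a - e + 1 - (b + e))).
    { apply RInt_upper; [lra|auto|]. intros x Hx. unfold p.
      rewrite plateau_far; auto; [lra|].
      apply distZ_far; unfold arc_radius, arc_mid; lra. }
    lra.
  - assert (RInt p (a - e) (a - e + 1) <= RInt g (a - e) (a - e + 1))
      by (apply RInt_mono; auto; lra).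
    rewrite <- (RInt_chasles g (a - e) (a - e + 1) (b + e) Hc).
    assert (0 <= RInt g (a - e + 1) (b + e)) by (apply RInt_nonneg; auto; lra).
    lra.
Qed.

Lemma RInt_widen (g : R -> R) a b e B : continuity g -> (forall x, Rabs (g x) <= B) ->
  a <= b -> 0 <= e -> RInt g (a - e) (b + e) <= RInt g a b + 2 * e * B.
Proof.
  intros Hc HB Hab He.
  rewrite <- (RInt_chasles g (a - e) a (b + e) Hc), <- (RInt_chasles g a b (b + e) Hc).
  assert (RInt g (a - e) a <= B * (a - (a - e))).
  { apply RInt_upper; [lra|auto|]. intros x _. pose proof (HB x). rabs; lra. }
  assert (RInt g b (b + e) <= B * (b + e - b)).
  { apply RInt_upper; [lra|auto|]. intros x _. pose proof (HB x). rabs; lra. }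
  lra.
Qed.

Lemma plateau_sum_weighted_mass n al be (g : R -> R) B e :
  (forall i, (i < n)%nat -> al i <= be i) -> continuity g -> periodic1 g ->
  (forall x, 0 <= g x) -> (forall x, Rabs (g x) <= B) -> 0 < e ->
  RInt (fun x => g x * plateau_sum n al be e x) 0 1 <= arc_mass n al be g + 2 * e * B * INR n.
Proof.
  intros Hab Hg Hgp Hg0 HB He.
  transitivity (sumR (fun i => RInt (fun x => g x * plateau (al i) (be i) e x) 0 1) n).
  - right. rewrite <- RInt_sumR.
    + apply RInt_ext. intros. unfold plateau_sum. rewrite sumR_mult_l. reflexivity.
    + intros. apply continuity_mult; auto. apply plateau_continuity.
  - replace (arc_mass n al be g + 2 * e * B * INR n)
      with (sumR (fun i => RInt g (al i) (be i) + 2 * e * B) n)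
      by (unfold arc_mass; rewrite sumR_add_const; ring).
    apply sumR_le. intros i Hi. eapply Rle_trans.
    + apply plateau_weighted_mass; auto.
    + apply RInt_widen; auto. lra.
Qed.

(** * The sign hypothesis on V and its consequences *)

(* Every continuous periodic h >= 0, not identically zero, vanishing on A
   makes the drift -(V*h) point out of each arc at both of its endpoints.
   This is verbatim the hypothesis of mainTheorem17. *)
Definition expels_from_arcs (V : R -> R) n (al be : nat -> R) : Prop :=
  forall h : R -> R, continuity h -> periodic1 h -> (forall x, 0 <= h x) ->
    (forall x, inA n al be x -> h x = 0) -> (exists x, h x <> 0) ->
    forall j, (j < n)%nat -> conv V h (al j) > 0 /\ conv V h (be j) < 0.

Lemma conv_endpoint_signs V n al be h j : continuity V -> expels_from_arcs V n al be ->
  continuity h -> periodic1 h -> (forall x, 0 <= h x) ->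
  (forall x, inA n al be x -> h x = 0) -> (j < n)%nat ->
  0 <= conv V h (al j) /\ conv V h (be j) <= 0.
Proof.
  intros HV Hexp Hc Hp Hnn HA Hj.
  destruct (classic (exists x, h x <> 0)) as [Hex|Hno].
  - destruct (Hexp h Hc Hp Hnn HA Hex j Hj). lra.
  - assert (Hz : forall x, h x = 0) by (intros x; apply NNPP; intros C; apply Hno; eauto).
    assert (Hconv : forall th, conv V h th = 0).
    { intros th. rewrite conv_RInt by auto.
      transitivity (RInt (fun _ => 0) 0 1); [|apply RInt_zero].
      apply RInt_ext. intros. rewrite Hz. req. ring. }
    rewrite !Hconv. lra.
Qed.

Lemma eventually_small_finite (P : nat -> R -> Prop) n :
  (forall i, (i < n)%nat -> exists e, 0 < e /\ forall e', 0 < e' <= e -> P i e') ->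
  exists e, 0 < e /\ forall i, (i < n)%nat -> forall e', 0 < e' <= e -> P i e'.
Proof.
  induction n; intros H.
  - exists 1. split; [lra | intros; lia].
  - destruct IHn as [e1 [He1 H1]]; [intros; apply H; lia|].
    destruct (H n) as [e2 [He2 H2]]; [lia|].
    exists (Rmin e1 e2). split; [apply Rmin_glb_lt; auto|].
    intros i Hi e' He'. pose proof (Rmin_l e1 e2). pose proof (Rmin_r e1 e2).
    destruct (Nat.eq_dec i n) as [->|Hne]; [apply H2 | apply H1]; lra || lia.
Qed.

Lemma degenerate_arc_neighbour n al be j : valid_intervals n al be -> (j < n)%nat ->
  al j = be j -> exists e, 0 < e /\ forall i, (i < n)%nat ->
    arc_radius (al i) (be i) + e <= distZ (al j + e - arc_mid (al i) (be i)).
Proof.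
  intros [_ Hdisj] Hj Heq. set (p := al j).
  destruct (eventually_small_finite (fun i e =>
      arc_radius (al i) (be i) + e <= distZ (p + e - arc_mid (al i) (be i))) n)
    as [e0 [He0 H0]].
  - intros i Hi. destruct (Nat.eq_dec i j) as [->|Hne].
    + exists (/4). split; [lra|]. intros e He. unfold p, arc_radius, arc_mid. rewrite <- Heq.
      replace (al j + e - (al j + al j) / 2) with e by field. rewrite distZ_small; lra.
    + assert (Hout : ~ in_arc (al i) (be i) p).
      { intros C. apply (Hdisj i j Hi Hj Hne p). split; auto.
        exists 0%Z. unfold p. rewrite Rplus_0_r. lra. }
      rewrite in_arc_distZ in Hout. apply Rnot_le_lt in Hout.
      set (gap := distZ (p - arc_mid (al i) (be i)) - arc_radius (al i) (be i)).
      exists (gap / 2). split; [unfold gap; lra|]. intros e He.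
      pose proof (distZ_lipschitz (p + e - arc_mid (al i) (be i)) (p - arc_mid (al i) (be i))).
      replace (p + e - arc_mid (al i) (be i) - (p - arc_mid (al i) (be i))) with e in H by ring.
      unfold gap in *. rabs; lra.
  - exists e0. split; auto. intros i Hi. apply H0; auto. lra.
Qed.

(* The hypothesis forces every arc to be nondegenerate: at a one-point arc
   the two endpoint conditions would contradict each other for the cutoff. *)
Lemma arcs_nondegenerate V n al be : valid_intervals n al be ->
  expels_from_arcs V n al be -> forall j, (j < n)%nat -> al j < be j.
Proof.
  intros Hval Hexp j Hj.
  destruct (proj1 Hval j Hj) as [Hle _].
  destruct (Rle_lt_or_eq_dec _ _ Hle) as [Hlt|Heq]; auto. exfalso.
  destruct (degenerate_arc_neighbour n al be j Hval Hj Heq) as [e [He Hfar]].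
  destruct (Hexp (cutoff n al be e) (cutoff_continuity _ _ _ _) (cutoff_periodic _ _ _ _))
    with (j := j) as [H1 H2]; auto.
  - intros. apply cutoff_bounds.
  - intros. apply cutoff_on_A; auto.
  - exists (al j + e). rewrite cutoff_away; auto. apply R1_neq_R0.
  - rewrite Heq in H1. lra.
Qed.

(** * Endpoint bounds for the convolution *)

Lemma le_of_linear_slack x y c : 0 <= c -> (forall e, 0 < e -> x <= y + c * e) -> x <= y.
Proof.
  intros Hc H. apply Rle_plus_epsilon. intros eps Heps.
  assert (He : 0 < eps / (c + 1)) by (apply Rdiv_lt_0_compat; lra).
  eapply Rle_trans; [apply (H _ He)|]. apply Rplus_le_compat_l.
  apply Rmult_le_reg_r with (c + 1); [lra|].
  replace (c * (eps / (c + 1)) * (c + 1)) with (c * eps) by (field; lra). nra.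
Qed.

Section EndpointBounds.
Variables (V : R -> R) (n : nat) (al be : nat -> R) (M : R).
Hypotheses (HV : continuity V) (HM : forall x, Rabs (V x) <= M)
  (Hab : forall i, (i < n)%nat -> al i <= be i) (Hexp : expels_from_arcs V n al be).

Lemma conv_cutoff_error (g : R -> R) B e th : continuity g -> periodic1 g ->
  (forall x, 0 <= g x) -> (forall x, Rabs (g x) <= B) -> 0 < e ->
  Rabs (conv V g th - conv V (fun x => g x * cutoff n al be e x) th)
    <= M * (arc_mass n al be g + 2 * e * B * INR n).
Proof.
  intros Hg Hgp Hg0 HB He.
  assert (M0 : 0 <= M) by (pose proof (HM 0); pose proof (Rabs_pos (V 0)); lra).
  rewrite conv_sub; auto; [| apply continuity_mult; auto; apply cutoff_continuity].
  eapply Rle_trans.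
  - apply (conv_abs_le V _ (fun x => g x * plateau_sum n al be e x)); auto.
    + apply continuity_minus; auto. apply continuity_mult; auto. apply cutoff_continuity.
    + apply continuity_mult; auto. apply plateau_sum_continuity.
    + intros x. pose proof (cutoff_bounds n al be e x). pose proof (cutoff_complement n al be e x).
      pose proof (Hg0 x). rewrite Rabs_pos_eq by nra. nra.
  - apply Rmult_le_compat_l; auto. apply plateau_sum_weighted_mass; auto.
Qed.

Lemma conv_endpoint_bounds (g : R -> R) j : continuity g -> periodic1 g ->
  (forall x, 0 <= g x) -> (j < n)%nat ->
  - M * arc_mass n al be g <= conv V g (al j) /\ conv V g (be j) <= M * arc_mass n al be g.
Proof.
  intros Hg Hgp Hg0 Hj.
  destruct (periodic_bounded g Hg Hgp) as [B [B0 HB]].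
  assert (M0 : 0 <= M) by (pose proof (HM 0); pose proof (Rabs_pos (V 0)); lra).
  assert (Hc : 0 <= 2 * M * B * INR n) by (pose proof (pos_INR n); repeat apply Rmult_le_pos; lra).
  assert (Hcut : forall e, 0 < e ->
    0 <= conv V (fun x => g x * cutoff n al be e x) (al j) /\
    conv V (fun x => g x * cutoff n al be e x) (be j) <= 0).
  { intros e He. apply (conv_endpoint_signs V n); auto.
    - apply continuity_mult; auto. apply cutoff_continuity.
    - intros x. rewrite Hgp, cutoff_periodic. reflexivity.
    - intros x. pose proof (cutoff_bounds n al be e x). pose proof (Hg0 x). nra.
    - intros x Hx. rewrite cutoff_on_A; auto. ring. }
  split; apply (le_of_linear_slack _ _ _ Hc); intros e He;
    pose proof (Hcut e He); [pose proof (conv_cutoff_error g B e (al j) Hg Hgp Hg0 HB He)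
                            | pose proof (conv_cutoff_error g B e (be j) Hg Hgp Hg0 HB He)];
    rabs; lra.
Qed.

(* The rate of change of the mass on A: the flux (V*g) g through the
   endpoints of the arcs. *)
Definition endpoint_flux (g : R -> R) :=
  sumR (fun j => conv V g (be j) * g (be j) - conv V g (al j) * g (al j)) n.

Lemma endpoint_flux_le (g : R -> R) : continuity g -> periodic1 g -> (forall x, 0 <= g x) ->
  endpoint_flux g <= M * sumR (fun j => g (al j) + g (be j)) n * arc_mass n al be g.
Proof.
  intros Hg Hgp Hg0. unfold endpoint_flux.
  rewrite (Rmult_comm M), Rmult_assoc, (Rmult_comm (sumR _ n)), sumR_mult_l.
  apply sumR_le. intros j Hj.
  destruct (conv_endpoint_bounds g j Hg Hgp Hg0 Hj).
  pose proof (Hg0 (al j)). pose proof (Hg0 (be j)). nra.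
Qed.

End EndpointBounds.

(** * Gronwall's lemma *)

(* Mean value theorem with the intermediate point in the open interval, so
   that differentiability is needed only in the interior. *)
Lemma mvt_open (G dG : R -> R) a b : a < b ->
  (forall x, a < x < b -> is_derive G x (dG x)) ->
  (forall x, a <= x <= b -> continuity_pt G x) ->
  exists c, a < c < b /\ G b - G a = dG c * (b - a).
Proof.
  intros Hab HD HC.
  set (pr1 := fun c (P : a < c < b) =>
    exist _ (dG c) (proj1 (is_derive_Reals G c (dG c)) (HD c P)) : derivable_pt G c).
  destruct (MVT G id a b pr1 (fun c _ => derivable_pt_id c) Hab HC
    (fun c _ => derivable_continuous_pt id c (derivable_pt_id c))) as [c [P Hc]].
  exists c. split; auto. rewrite derive_pt_id in Hc. simpl in Hc. unfold id in Hc. lra.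
Qed.

(* A nonnegative E with E(0) = 0 and E' <= K E (K continuous) on (0, oo)
   vanishes on [0, oo): E(t) exp(-C t) is nonincreasing on [0, t0] when C
   bounds K there. *)
Lemma gronwall_zero (E K dE : R -> R) :
  (forall t, continuity_pt E t) -> (forall t, continuity_pt K t) ->
  (forall t, 0 <= t -> 0 <= E t) -> E 0 = 0 ->
  (forall t, 0 < t -> is_derive E t (dE t)) -> (forall t, 0 < t -> dE t <= K t * E t) ->
  forall t, 0 <= t -> E t = 0.
Proof.
  intros HE HK Hnn HE0 HD Hle t0 Ht0.
  destruct (Rle_lt_or_eq_dec _ _ Ht0) as [Hpos|<-]; auto.
  destruct (continuity_ab_maj K 0 t0) as [Mx [HMx _]]; [lra | intros; apply HK|].
  set (C := K Mx).
  set (G := fun x => E x * exp (- C * x)).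
  assert (HG : forall x, 0 < x -> is_derive G x ((dE x - C * E x) * exp (- C * x))).
  { intros x Hx. unfold G. replace ((dE x - C * E x) * exp (- C * x))
      with (dE x * exp (- C * x) + E x * (- C * exp (- C * x))) by ring.
    apply (is_derive_mult E (fun x => exp (- C * x))); [apply HD; auto | | intros; apply Rmult_comm].
    auto_derive; auto. ring. }
  destruct (mvt_open G _ 0 t0 Hpos (fun x Hx => HG x (proj1 Hx))) as [c [Hc Hmvt]].
  { intros x _. apply continuity_pt_mult; [apply HE|].
    apply derivable_continuous_pt. apply derivable_pt_comp; [apply derivable_pt_scal, derivable_pt_id | apply derivable_pt_exp]. }
  assert (HKc : K c <= C) by (apply HMx; lra).
  assert (0 <= E c) by (apply Hnn; lra).
  pose proof (Hle c (proj1 Hc)). pose proof (exp_pos (- C * c)). pose proof (exp_pos (- C * t0)).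
  assert ((dE c - C * E c) * exp (- C * c) <= 0) by (apply Rmult_le_0_r; nra).
  unfold G in Hmvt. rewrite HE0, Rmult_0_l in Hmvt.
  assert (E t0 <= 0) by nra. pose proof (Hnn t0 Ht0). lra.
Qed.

(** * Time regularity of the mass of a solution *)

Lemma cont2_on_slice (P : R -> R -> Prop) F t : cont2_on P F -> (forall th, P t th) ->
  continuity (F t).
Proof.
  intros HF HP x. apply continuity_pt_intro. intros eps Heps.
  destruct (HF t x (HP x) eps Heps) as [del [Hdel H]]. exists del. split; auto.
  intros y Hy. apply H; auto. rewrite Rminus_diag, Rabs_R0. auto.
Qed.

Lemma cont2_on_2d (P : R -> R -> Prop) F t th : cont2_on P F -> P t th ->
  (exists r, 0 < r /\ forall s phi, Rabs (s - t) < r -> P s phi) -> continuity_2d_pt F t th.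
Proof.
  intros HF Hp [r [Hr HPr]] eps. destruct (HF t th Hp eps (cond_pos eps)) as [del [Hdel H]].
  assert (Hm : 0 < Rmin del r) by (apply Rmin_glb_lt; auto).
  exists (mkposreal _ Hm). intros u v Hu Hv. simpl in Hu, Hv.
  pose proof (Rmin_l del r). pose proof (Rmin_r del r). apply H; [apply HPr | |]; lra.
Qed.

(* Integrals of a jointly continuous function depend continuously on the
   parameter (uniform continuity on compact sets). *)
Lemma RInt_param_continuity (F : R -> R -> R) a b : a <= b ->
  cont2_on (fun _ _ => True) F -> continuity (fun s => RInt (F s) a b).
Proof.
  intros Hab HF t. apply continuity_pt_intro. intros eps Heps.
  assert (HF2 : forall s x, continuity_2d_pt F s x)
    by (intros; apply (cont2_on_2d (fun _ _ => True) F); auto; exists 1; split; auto; lra).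
  assert (Hsl : forall s, continuity (F s)) by (intros; apply (cont2_on_slice (fun _ _ => True) F); auto).
  assert (He' : 0 < eps / (b - a + 1)) by (apply Rdiv_lt_0_compat; lra).
  destruct (uniform_continuity_2d_1d' F a b t (fun x _ => HF2 t x) (mkposreal _ He')) as [del Hdel].
  exists del. split; [apply cond_pos|]. intros s Hs. simpl in Hdel.
  assert (Hpt : forall x, a < x < b -> Rabs (F s x + -1 * F t x) <= eps / (b - a + 1)).
  { intros x Hx. left. replace (F s x + -1 * F t x) with (F s x - F t x) by ring.
    apply Hdel; rabs; lra. }
  assert (Hdiff : RInt (F s) a b - RInt (F t) a b = RInt (fun x => F s x + -1 * F t x) a b)
    by (rewrite RInt_lin by auto; ring).
  rewrite Hdiff.
  assert (Hc : continuity (fun x => F s x + -1 * F t x))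
    by (apply continuity_plus; [apply Hsl | apply continuity_scal, Hsl]).
  assert (RInt (fun x => F s x + -1 * F t x) a b <= eps / (b - a + 1) * (b - a))
    by (apply RInt_upper; auto; intros x Hx; pose proof (Hpt x Hx); rabs; lra).
  assert (RInt (fun x => -1 * (F s x + -1 * F t x)) a b <= eps / (b - a + 1) * (b - a))
    by (apply RInt_upper; auto; [apply continuity_scal, Hc | intros x Hx; pose proof (Hpt x Hx); rabs; lra]).
  rewrite RInt_scal_l in H0 by auto.
  assert (eps / (b - a + 1) * (b - a) < eps).
  { replace (eps / (b - a + 1) * (b - a)) with (eps - eps / (b - a + 1)) by (field; lra). lra. }
  rabs; lra.
Qed.

Section Solution.
Variables (V : R -> R) (f ft : R -> R -> R).
Hypotheses (Hf : cont2_on (fun t _ => 0 <= t) f) (Hft : cont2_on (fun t _ => 0 < t) ft)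
  (Hdt : forall t th, 0 < t -> derivable_pt_lim (fun s => f s th) t (ft t th))
  (Heq : forall t th, 0 < t ->
     derivable_pt_lim (fun phi => conv V (f t) phi * f t phi) th (ft t th)).

(* f extended to negative times by f(0, .), jointly continuous everywhere. *)
Definition f_plus s th := f (Rmax 0 s) th.

Lemma f_plus_pos s : 0 <= s -> f_plus s = f s.
Proof. intros Hs. unfold f_plus. rewrite Rmax_right by auto. reflexivity. Qed.

Lemma f_plus_cont2 : cont2_on (fun _ _ => True) f_plus.
Proof.
  intros s th _ eps Heps. destruct (Hf (Rmax 0 s) th (Rmax_l 0 s) eps Heps) as [del [Hdel H]].
  exists del. split; auto. intros u v _ Hu Hv. apply H; auto. apply Rmax_l.
  eapply Rle_lt_trans; [apply Rmax0_lipschitz | exact Hu].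
Qed.

Lemma f_plus_time_continuity th : continuity (fun s => f_plus s th).
Proof.
  intros s. apply continuity_pt_intro. intros eps Heps.
  destruct (f_plus_cont2 s th I eps Heps) as [del [Hdel H]]. exists del. split; auto.
  intros u Hu. apply H; auto. rewrite Rminus_diag, Rabs_R0. auto.
Qed.

(* For t > 0 the time derivative of the mass on [a, b] is the integral of
   d_t f, and by the equation this is the flux through the endpoints. *)
Lemma RInt_f_plus_derive a b t : 0 < t ->
  is_derive (fun s => RInt (f_plus s) a b) t
    (conv V (f t) b * f t b - conv V (f t) a * f t a).
Proof.
  intros Ht.
  assert (Hpos : locally t (fun s => 0 < s)).
  { exists (mkposreal t Ht). intros y Hy. change (Rabs (y - t) < t) in Hy. rabs; lra. }
  assert (Hflux : RInt (ft t) a b = conv V (f t) b * f t b - conv V (f t) a * f t a).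
  { apply is_RInt_unique.
    apply (is_RInt_derive (V := R_CompleteNormedModule) (fun x => conv V (f t) x * f t x)).
    - intros x _. apply is_derive_Reals, Heq, Ht.
    - intros x _. apply continuous_of_continuity. apply (cont2_on_slice _ ft t Hft). auto. }
  rewrite <- Hflux.
  replace (RInt (ft t) a b) with (RInt (fun th => Derive (fun u => f u th) t) a b)
    by (apply RInt_ext; intros; apply is_derive_unique, is_derive_Reals, Hdt, Ht).
  apply (is_derive_ext_loc (fun s => RInt (fun th => f s th) a b)).
  - apply (filter_imp (fun s => 0 < s)); auto.
    intros s Hs. apply RInt_ext. intros. unfold f_plus. rewrite Rmax_right by lra. reflexivity.
  - apply is_derive_RInt_param.
    + apply (filter_imp (fun s => 0 < s)); auto.
      intros s Hs th _. exists (ft s th). apply is_derive_Reals, Hdt, Hs.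
    + intros th _. apply continuity_2d_pt_ext_loc with ft.
      * exists (mkposreal t Ht). intros u v Hu _. simpl in Hu. symmetry.
        apply is_derive_unique, is_derive_Reals, Hdt. rabs; lra.
      * apply (cont2_on_2d _ ft t th Hft Ht). exists t. split; auto. intros. rabs; lra.
    + apply (filter_imp (fun s => 0 < s)); auto.
      intros s Hs. apply ex_RInt_continuity, (cont2_on_slice _ f s Hf). intros; lra.
Qed.

Lemma arc_mass_derive n al be t : 0 < t ->
  is_derive (fun s => arc_mass n al be (f_plus s)) t (endpoint_flux V n al be (f t)).
Proof.
  intros Ht. apply (is_derive_sumR (fun j s => RInt (f_plus s) (al j) (be j))).
  intros j _. apply RInt_f_plus_derive, Ht.
Qed.

End Solution.

Theorem mainTheorem17 (V : R -> R) (n : nat) (alpha beta : nat -> R) (f : R -> R -> R) :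
  continuity V -> periodic1 V -> odd_fun V ->
  valid_intervals n alpha beta ->
  (forall h : R -> R, continuity h -> periodic1 h -> (forall x, 0 <= h x) ->
     (forall x, inA n alpha beta x -> h x = 0) -> (exists x, h x <> 0) ->
     forall j, (j < n)%nat -> conv V h (alpha j) > 0 /\ conv V h (beta j) < 0) ->
  TP0_solution V f ->
  (forall t theta, 0 <= t -> 0 <= f t theta) ->
  (forall theta, inA n alpha beta theta -> f 0 theta = 0) ->
  forall t theta, 0 <= t -> inA n alpha beta theta -> f t theta = 0.
Proof.
  intros HV HVp _ Hval Hexp [Hper [ft [fth [Hf [Hft [_ [Hdt [_ Heq]]]]]]]] Hnn Hinit.
  pose proof (arcs_nondegenerate V n alpha beta Hval Hexp) as Hlt.
  assert (Hle : forall j, (j < n)%nat -> alpha j <= beta j) by (intros; left; auto).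
  assert (Hslice : forall s, 0 <= s -> continuity (f s))
    by (intros s Hs; apply (cont2_on_slice _ f s Hf); auto).
  destruct (periodic_bounded V HV HVp) as [M [_ HM]].
  set (E := fun s => arc_mass n alpha beta (f_plus f s)).
  set (K := fun s => M * sumR (fun j => f_plus f s (alpha j) + f_plus f s (beta j)) n).
  assert (HE : forall s, 0 <= s -> E s = 0).
  { apply (gronwall_zero E K (fun s => endpoint_flux V n alpha beta (f s))).
    - apply (sumR_continuity (fun j s => RInt (f_plus f s) (alpha j) (beta j))).
      intros j Hj. apply RInt_param_continuity; auto. apply f_plus_cont2, Hf.
    - apply continuity_scal, (sumR_continuity (fun j s => f_plus f s (alpha j) + f_plus f s (beta j))).
      intros j _. apply continuity_plus; apply f_plus_time_continuity, Hf.
    - intros s Hs. apply sumR_ge0. intros j Hj. rewrite f_plus_pos by lra.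
      apply RInt_nonneg; auto.
    - unfold E. rewrite f_plus_pos by lra. apply arc_mass_vanishing; auto.
    - intros s Hs. apply (arc_mass_derive V f ft); auto.
    - intros s Hs. unfold E, K. rewrite !f_plus_pos by lra.
      apply endpoint_flux_le; auto; [apply Hslice | apply Hper | intros; apply Hnn]; lra. }
  intros t th Ht HA.
  apply (vanishing_of_arc_mass n alpha beta (f t)); auto.
  rewrite <- (f_plus_pos f t Ht). apply HE, Ht.
Qed.
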